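(* Let $(\Sigma^{(n)})_{n\ge1}$ be a sequence of positive semidefinite matrices (of dimensions $d_n\times d_n$). Suppose that for each $n$ there is a covariance splitting $\Sigma^{(n)}=\Sigma_1\oplus\Sigma_2$ such that, as $n\to\infty$, $$\operatorname{rank}(\Sigma_1)=o(n),\qquad \operatorname{Tr}\Sigma_2=o(n),\qquad \frac{(\operatorname{Tr}\Sigma_2)^2}{\operatorname{Tr}(\Sigma_2^2)}=\omega(n).$$ Then for each $n$ there is a (possibly different) covariance splitting $\Sigma^{(n)}=\Sigma_1'\oplus\Sigma_2'$ such that $$\operatorname{rank}(\Sigma_1')=o(n),\quad \operatorname{Tr}\Sigma_2'=o(n),\quad \frac{\operatorname{Tr}\Sigma_2'}{\|\Sigma_2'\|_{op}}=\omega(n),\quad \frac{(\operatorname{Tr}\Sigma_2')^2}{\operatorname{Tr}((\Sigma_2')^2)}=\omega(n).$$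
   Context: Covariance splitting: $\Sigma=\Sigma_1\oplus\Sigma_2$ means $\Sigma=\Sigma_1+\Sigma_2$ with $\Sigma_1,\Sigma_2$ positive semidefinite and with orthogonal column spaces. $\|\cdot\|_{op}$ is the operator norm. *)

From HB Require Import structures.
From mathcomp Require Import all_boot all_order all_algebra.
From mathcomp Require Import all_classical all_reals.
From mathcomp Require Import topology normedtype.
Set Implicit Arguments. Unset Strict Implicit. Unset Printing Implicit Defensive.
Import Order.TTheory GRing.Theory Num.Theory.
Local Open Scope ring_scope.
Local Open Scope classical_set_scope.

Section Defs.
Variable R : realType.

Definition psd m (A : 'M[R]_m) : Prop :=
  A^T = A /\ forall v : 'cV[R]_m, 0 <= (v^T *m A *m v) 0 0.

Definition vnorm2 m (v : 'cV[R]_m) : R := Num.sqrt (\sum_i v i 0 ^+ 2).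

Definition opnorm m (A : 'M[R]_m) : R :=
  sup [set vnorm2 (A *m v) | v in [set v : 'cV[R]_m | vnorm2 v = 1]].

(* covariance splitting  S = S1 (+) S2 : S = S1 + S2, S1, S2 psd, and the
   column spaces of S1 and S2 are orthogonal (every column of S1 is
   orthogonal to every column of S2, i.e. S1^T S2 = 0). *)
Definition cov_splitting m (S S1 S2 : 'M[R]_m) : Prop :=
  [/\ S = S1 + S2, psd S1, psd S2 & S1^T *m S2 = 0].

Definition little_o_n (f : nat -> R) : Prop :=
  forall eps : R, 0 < eps -> \forall n \near \oo, `|f n| <= eps * n%:R.

Definition omega_n (f : nat -> R) : Prop :=
  forall C : R, 0 < C -> \forall n \near \oo, C * n%:R <= `|f n|.

End Defs.

From HB Require Import structures.
From mathcomp Require Import all_boot all_order all_algebra.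
From mathcomp Require Import all_classical all_reals.
From mathcomp Require Import topology normedtype.
From mathcomp Require Import complex ring lra.
Import Order.TTheory GRing.Theory Num.Theory.
Local Open Scope ring_scope.
Set Implicit Arguments. Unset Strict Implicit. Unset Printing Implicit Defensive.

(* Write the second summand of the given splitting in an
   orthonormal eigenbasis, S2 = Q^T diag(d) Q with d >= 0, and cut its
   spectrum at a threshold t: the eigenvalues above t are moved to the first
   summand, those below t stay.  With s = tr S2 and q = tr S2^2, Markov-type
   counting shows that at most q / t^2 eigenvalues are moved and that they
   carry at most q / t of the trace; the new second summand has operator norm
   at most t and its squared trace is no larger than q.  Choosing
   t = s / (delta n) with delta^4 = s^2 / (q n), which tends to infinity by
   the effective-rank hypothesis, keeps the rank o(n), keeps at least half of
   the trace, and makes both tr / ||.||_op and tr^2 / tr(.^2) of order omega(n). *)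

(* A real symmetric matrix has a real eigenvalue with a real eigenvector: its
   complex eigenvalue a satisfies  a <z,z> = <z, A z>,  which is real. *)
Lemma symmetric_real_eigenvector (R : rcfType) n (A : 'M[R]_n.+1) : A^T = A ->
  exists k : R, exists2 v : 'rV[R]_n.+1, v *m A = k *: v & v != 0.
Proof.
move=> sA.
pose AC := map_mx (real_complex R) A.
have [a ea] := @eigenvalue_closed _ _ AC (ltn0Sn n).
have [z za z0] := eigenvalueP ea.
pose N := \sum_i z 0 i * (z 0 i)^*.
pose s := \sum_i \sum_j z 0 i * AC i j * (z 0 j)^*.
have sE : s = a * N.
  rewrite /s exchange_big /= /N mulr_sumr; apply: eq_bigr => j _.
  rewrite -mulr_suml mulrA.
  by move/rowP: za => /(_ j); rewrite !mxE => ->.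
have ACr i j : (AC i j)^* = AC i j by rewrite mxE; apply: conjc_real.
have ACs i j : AC i j = AC j i by rewrite !mxE -[A in LHS]sA mxE.
have s_real : s^* = s.
  rewrite /s rmorph_sum /= exchange_big /=; apply: eq_bigr => i _.
  rewrite rmorph_sum /=; apply: eq_bigr => j _.
  by rewrite !rmorphM /= conjCK ACr ACs; ring.
have N_real : N^* = N.
  rewrite /N rmorph_sum; apply: eq_bigr => i _.
  by rewrite rmorphM /= conjCK mulrC.
have N0 : N != 0.
  apply: contra z0 => /eqP N0; apply/eqP/rowP => j; rewrite mxE.
  have := N0; rewrite /N => /eqP; rewrite psumr_eq0; last first.
    by move=> i _; rewrite mul_conjC_ge0.
  by move=> /allP /(_ j (mem_index_enum _)) /=; rewrite mul_conjC_eq0 => /eqP.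
have a_real : a \is Num.real.
  rewrite CrealE; apply/eqP.
  have : (a * N)^* = a * N by rewrite -sE s_real.
  by rewrite rmorphM /= N_real => /(mulIf N0).
have [k ak] := complex_realP _ a_real.
exists k; apply/eigenvalueP.
have : eigenvalue AC (real_complex R k) by rewrite -ak.
by rewrite eigenvalue_map.
Qed.

Lemma row_self_dot_eq0 (R : realFieldType) m (v : 'rV[R]_m) :
  v *m v^T = 0 -> v = 0.
Proof.
move=> /matrixP /(_ 0 0); rewrite !mxE => /eqP.
rewrite psumr_eq0; last by move=> i _; rewrite mxE -expr2 sqr_ge0.
move=> /allP vv0; apply/rowP => i; rewrite mxE.
by have := vv0 i (mem_index_enum _); rewrite /= mxE mulf_eq0 orbb => /eqP.
Qed.

(* Householder reflection: a symmetric involution mapping the first basis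
   vector e0 to a given unit row vector u, namely 1 - 2 w^T w / |w|^2 with
   w = e0 - u. *)
Lemma householder_reflection (R : realFieldType) m (u : 'rV[R]_(1 + m)) :
  u *m u^T = 1%:M -> exists H : 'M[R]_(1 + m),
  [/\ H^T = H, H *m H = 1%:M & row_mx 1%:M 0 *m H = u].
Proof.
move=> uu.
pose e0 : 'rV[R]_(1 + m) := row_mx 1%:M 0.
have ee : e0 *m e0^T = 1%:M.
  by rewrite tr_row_mx mul_row_col trmx1 mulmx1 trmx0 mulmx0 addr0.
pose w := e0 - u.
pose nw := (w *m w^T) 0 0.
pose c := 2 / nw.
pose W := w^T *m w.
have wwE : w *m w^T = nw%:M by apply: mx11_scalar.
have WW : W *m W = nw *: W.
  by rewrite /W mulmxA -[w^T *m w *m w^T]mulmxA wwE mul_mx_scalar scalemxAl.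
have cc : c * c * nw = 2 * c.
  have [nw0|nz] := eqVneq nw 0; first by rewrite /c nw0 invr0 !mulr0.
  by rewrite /c; field.
exists (1%:M - c *: W); split.
- by rewrite raddfB /= trmx1 linearZ /= /W trmx_mul trmxK.
- have -> : (1%:M - c *: W) *m (1%:M - c *: W) =
            1%:M + (c * c * nw - 2 * c) *: W.
    rewrite mulmxBl !mulmxBr mul1mx mulmx1 -!scalemxAl -!scalemxAr WW !scalerA.
    rewrite mul1mx mulr_natl scalerBl -scalerMnl mulr2n.
    by rewrite opprB -addrA; congr (_ + _); rewrite addrCA opprD.
  by rewrite cc subrr scale0r addr0.
- rewrite -/e0.
  pose b := (e0 *m u^T) 0 0.
  have eu : e0 *m u^T = b%:M by apply: mx11_scalar.
  have ue : u *m e0^T = b%:M by rewrite -[u]trmxK -trmx_mul eu tr_scalar_mx.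
  have scalarB (x y : R) : (x - y)%:M = x%:M - y%:M :> 'M[R]_1 by rewrite raddfB.
  have ewE : e0 *m w^T = (1 - b)%:M.
    by rewrite /w raddfB /= mulmxBr ee eu scalarB.
  have nwE : nw = 2 * (1 - b).
    have : w *m w^T = (2 * (1 - b))%:M.
      rewrite /w raddfB /= mulmxBr !mulmxBl ee eu ue uu -!scalarB.
      by congr (_%:M); ring.
    by rewrite wwE => /matrixP /(_ 0 0); rewrite !mxE /= !mulr1n.
  rewrite mulmxBr mulmx1 -scalemxAr mulmxA ewE mul_scalar_mx scalerA.
  have [b1|b1] := eqVneq b 1.
    have w0 : w = 0.
      by apply: row_self_dot_eq0; rewrite wwE nwE b1 subrr mulr0 raddf0.
    rewrite w0 scaler0 subr0.
    by move/eqP: w0; rewrite subr_eq0 => /eqP.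
  have -> : c * (1 - b) = 1.
    by rewrite /c nwE; field; rewrite subr_eq0 eq_sym.
  by rewrite scale1r /w opprB addrC subrK.
Qed.

(* Induction on the size: a Householder reflection moving a
   unit eigenvector to e0 splits off a 1 x 1 diagonal block. *)
Lemma real_spectral (R : rcfType) n (A : 'M[R]_n) : A^T = A ->
  exists (Q : 'M[R]_n) (d : 'rV[R]_n),
    Q *m Q^T = 1%:M /\ A = Q^T *m diag_mx d *m Q.
Proof.
elim: n A => [|m IH] A sA.
  exists 1%:M, 0; split; first by rewrite trmx1 mulmx1.
  by apply/matrixP => -[].
have [k [v vA v0]] := symmetric_real_eigenvector sA.
pose nv := (v *m v^T) 0 0.
have nv_gt0 : 0 < nv.
  rewrite lt_def; apply/andP; split.
    apply: contra v0 => /eqP nv0; apply/eqP/row_self_dot_eq0.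
    by rewrite [v *m v^T]mx11_scalar -/nv nv0 raddf0.
  by rewrite /nv mxE sumr_ge0 // => i _; rewrite mxE -expr2 sqr_ge0.
pose u := (Num.sqrt nv)^-1 *: v.
have uu : u *m u^T = 1%:M.
  rewrite /u linearZ /= -scalemxAl -scalemxAr scalerA [v *m v^T]mx11_scalar -/nv.
  rewrite scale_scalar_mx; congr (_%:M).
  by rewrite -invfM -expr2 sqr_sqrtr ?ltW // mulVf // lt0r_neq0.
have uA : u *m A = k *: u by rewrite /u -scalemxAl vA !scalerA mulrC.
move: A sA u uu uA {vA v0 nv_gt0}.
change (forall A : 'M[R]_(1 + m), A^T = A -> forall u : 'rV_(1 + m),
  u *m u^T = 1%:M -> u *m A = k *: u ->
  exists (Q : 'M_(1 + m)) (d : 'rV_(1 + m)),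
    Q *m Q^T = 1%:M /\ A = Q^T *m diag_mx d *m Q).
move=> A sA u uu uA.
have [H [HT HH eH]] := householder_reflection uu.
pose B := H *m A *m H.
have BT : B^T = B by rewrite /B !trmx_mul HT sA mulmxA.
pose e0 : 'rV[R]_(1 + m) := row_mx 1%:M 0.
have eB : e0 *m B = k *: e0.
  by rewrite /B !mulmxA eH uA -scalemxAl -eH -mulmxA HH mulmx1.
have uB : usubmx B = row_mx k%:M 0.
  have := eB; rewrite -[B in LHS]vsubmxK /e0 mul_row_col mul1mx mul0mx addr0 => ->.
  by rewrite scale_row_mx scalemx1 scaler0.
have Bul : ulsubmx B = k%:M by rewrite /ulsubmx uB row_mxKl.
have Bur : ursubmx B = 0 by rewrite /ursubmx uB row_mxKr.
have Bdl : dlsubmx B = 0 by rewrite -BT -trmx_ursub Bur trmx0.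
have sB' : (drsubmx B)^T = drsubmx B by rewrite trmx_drsub BT.
have [Q' [d' [QQ' BQ']]] := IH _ sB'.
pose P : 'M[R]_(1 + m) := block_mx 1%:M 0 0 Q'.
exists (P *m H), (row_mx k%:M d'); split.
  rewrite trmx_mul HT mulmxA -[P *m H *m H]mulmxA HH mulmx1.
  rewrite /P tr_block_mx mulmx_block !trmx0 trmx1 !mulmx0 !mul0mx !mulmx1.
  by rewrite !addr0 add0r QQ' -scalar_mx_block.
have -> : A = H *m B *m H.
  by rewrite /B !mulmxA HH mul1mx -mulmxA HH mulmx1.
rewrite -[B]submxK Bul Bur Bdl BQ' trmx_mul HT !mulmxA; congr (_ *m _).
rewrite -!mulmxA; congr (_ *m _).
rewrite diag_mx_row /P tr_block_mx !mulmx_block !trmx0 trmx1.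
rewrite !mulmx0 !mul0mx !mul1mx !mulmx1 !addr0 !add0r.
have -> : diag_mx (k%:M : 'rV[R]_1) = k%:M.
  by apply/matrixP => i j; rewrite !ord1 !mxE.
by rewrite mulmx0.
Qed.

Section OrthogonallyDiagonal.
Variables (R : realType) (m : nat) (Q : 'M[R]_m).
Local Open Scope classical_set_scope.

Definition odiag (d : 'rV[R]_m) : 'M[R]_m := Q^T *m diag_mx d *m Q.

Lemma odiag_sym (d : 'rV[R]_m) : (odiag d)^T = odiag d.
Proof. by rewrite !trmx_mul trmxK tr_diag_mx mulmxA. Qed.

Lemma odiag_quad (d : 'rV[R]_m) (v : 'cV[R]_m) :
  (v^T *m odiag d *m v) 0 0 = \sum_i d 0 i * (Q *m v) i 0 ^+ 2.
Proof.
have -> : v^T *m odiag d *m v = (Q *m v)^T *m diag_mx d *m (Q *m v).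
  by rewrite trmx_mul !mulmxA.
rewrite -mulmxA mul_diag_mx mxE; apply: eq_bigr => i _.
by rewrite !mxE; ring.
Qed.

Lemma odiag_psd (d : 'rV[R]_m) : (forall i, 0 <= d 0 i) -> psd (odiag d).
Proof.
move=> d_ge0; split=> [|v]; first exact: odiag_sym.
by rewrite odiag_quad sumr_ge0 // => i _; rewrite mulr_ge0 // sqr_ge0.
Qed.

Lemma odiagD (a b : 'rV[R]_m) : odiag a + odiag b = odiag (a + b).
Proof.
rewrite /odiag -mulmxDl -mulmxDr; congr (_ *m _ *m _).
by apply/matrixP => i j; rewrite !mxE mulrnDl.
Qed.

Lemma rank_odiag (d : 'rV[R]_m) :
  (\rank (odiag d) <= #|[pred i | d 0%R i != 0%R]|)%N.
Proof.
apply: leq_trans (mxrankM_maxl _ _) _; apply: leq_trans (mxrankM_maxr _ _) _.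
rewrite diag_mx_sum_delta (bigID (fun i => d 0 i != 0)) /=.
rewrite [X in (_ + X)%R]big1 ?addr0; last first.
  by move=> i /negbNE /eqP ->; rewrite scale0r.
rewrite -sum1_card; elim/big_ind2: _ => [|A a B b hA hB|i _].
- by rewrite mxrank0.
- by apply: leq_trans (mxrank_add _ _) (leq_add hA hB).
- by apply: leq_trans (mxrank_scale _ _) _; rewrite mxrank_delta.
Qed.

Definition mask (P : pred 'I_m) (d : 'rV[R]_m) : 'rV[R]_m :=
  \row_i (if P i then d 0 i else 0).

Lemma sum_mask (P : pred 'I_m) (d : 'rV[R]_m) :
  \sum_i mask P d 0 i = \sum_(i | P i) d 0 i.
Proof. by rewrite [RHS]big_mkcond; apply: eq_bigr => i _; rewrite mxE. Qed.

Lemma odiag_mask_split (P : pred 'I_m) (d : 'rV[R]_m) :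
  odiag (mask P d) + odiag (mask (predC P) d) = odiag d.
Proof.
rewrite odiagD; congr odiag; apply/rowP => j; rewrite !mxE /=.
by case: (P j); rewrite ?addr0 ?add0r.
Qed.

Hypothesis QQ : Q *m Q^T = 1%:M.

Lemma odiagM (a b : 'rV[R]_m) : odiag a *m odiag b = odiag (\row_i (a 0 i * b 0 i)).
Proof.
rewrite /odiag !mulmxA -[_ *m Q *m Q^T]mulmxA QQ mulmx1 -[X in X *m Q]mulmxA.
congr (_ *m _ *m _); apply/matrixP => i j; rewrite mul_diag_mx !mxE.
by case: (i == j); rewrite ?mulr1n ?mulr0n ?mulr0.
Qed.

Lemma tr_odiag (d : 'rV[R]_m) : \tr (odiag d) = \sum_i d 0 i.
Proof. by rewrite mxtrace_mulC mulmxA QQ mul1mx mxtrace_diag. Qed.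

Lemma tr_odiag_sqr (d : 'rV[R]_m) : \tr (odiag d *m odiag d) = \sum_i d 0 i ^+ 2.
Proof. by rewrite odiagM tr_odiag; apply: eq_bigr => i _; rewrite mxE expr2. Qed.

Lemma odiag_mask_orth (P : pred 'I_m) (a b : 'rV[R]_m) :
  odiag (mask P a) *m odiag (mask (predC P) b) = 0.
Proof.
rewrite odiagM (_ : \row__ _ = 0) /odiag ?linear0 ?mulmx0 ?mul0mx //.
by apply/rowP => j; rewrite !mxE /=; case: (P j); rewrite ?mulr0 ?mul0r.
Qed.

Lemma odiag_mask_proj (P : pred 'I_m) (d : 'rV[R]_m) :
  odiag (mask P d) = odiag d *m odiag (mask P (const_mx 1)).
Proof.
rewrite odiagM; congr odiag; apply/rowP => j; rewrite !mxE.
by case: (P j); rewrite ?mulr0 ?mulr1.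
Qed.

Lemma vnorm2_sqr (v : 'cV[R]_m) : vnorm2 v ^+ 2 = \sum_i v i 0 ^+ 2.
Proof. by rewrite sqr_sqrtr // sumr_ge0 // => i _; exact: sqr_ge0. Qed.

Lemma vnorm2_delta (c : R) (i : 'I_m) :
  vnorm2 (c *: delta_mx i 0 : 'cV[R]_m) = `|c|.
Proof.
rewrite /vnorm2 (bigD1 i) //= big1 => [|j ji]; last first.
  by rewrite !mxE (negbTE ji) mulr0 expr0n.
by rewrite addr0 !mxE !eqxx mulr1 sqrtr_sqr.
Qed.

Lemma vnorm2_isometry (P : 'M[R]_m) (v : 'cV[R]_m) :
  P^T *m P = 1%:M -> vnorm2 (P *m v) = vnorm2 v.
Proof.
have dotE (w : 'cV[R]_m) : vnorm2 w = Num.sqrt ((w^T *m w) 0 0).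
  by rewrite /vnorm2 mxE; congr Num.sqrt; apply: eq_bigr => i _; rewrite mxE expr2.
by move=> PP; rewrite !dotE trmx_mul -mulmxA [P^T *m (P *m v)]mulmxA PP mul1mx.
Qed.

Lemma odiag_norm_le (d : 'rV[R]_m) t (v : 'cV[R]_m) : 0 <= t ->
  (forall i, `|d 0 i| <= t) -> vnorm2 v = 1 -> vnorm2 (odiag d *m v) <= t.
Proof.
move=> t_ge0 dt v1.
have w1 : vnorm2 (Q *m v) = 1 by rewrite vnorm2_isometry // mulmx1C.
rewrite /odiag -!mulmxA vnorm2_isometry ?trmxK //.
rewrite -(ler_pXn2r (isT : (0 < 2)%N)) ?nnegrE ?sqrtr_ge0 // vnorm2_sqr.
rewrite -[t ^+ 2]mulr1 -(expr1n _ 2) -w1 vnorm2_sqr mulr_sumr.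
apply: ler_sum => i _; rewrite mul_diag_mx mxE exprMn ler_wpM2r ?sqr_ge0 //.
by apply: le_trans (ler_norm _) _; rewrite normrX lerXn2r ?nnegrE.
Qed.

Lemma opnorm_odiag_le (d : 'rV[R]_m) t : 0 <= t ->
  (forall i, `|d 0 i| <= t) -> opnorm (odiag d) <= t.
Proof.
move=> t_ge0 dt; rewrite /opnorm.
set E := [set _ | _ in _].
have [E0|/set0P/negP/negPn/eqP ->] := pselect (E !=set0); last by rewrite sup0.
by apply: ge_sup => // _ [v v1 <-]; exact: odiag_norm_le.
Qed.

Lemma opnorm_odiag_ge (d : 'rV[R]_m) t i : 0 <= t ->
  (forall i, `|d 0 i| <= t) -> `|d 0 i| <= opnorm (odiag d).
Proof.
move=> t_ge0 dt; rewrite /opnorm.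
pose v : 'cV[R]_m := Q^T *m delta_mx i 0.
have v1 : vnorm2 v = 1.
  by rewrite vnorm2_isometry ?trmxK // -[delta_mx i 0]scale1r vnorm2_delta normr1.
have dv : vnorm2 (odiag d *m v) = `|d 0 i|.
  rewrite -!mulmxA [Q *m _]mulmxA QQ mul1mx vnorm2_isometry ?trmxK //.
  rewrite -(vnorm2_delta _ i); congr vnorm2; apply/matrixP => a b.
  by rewrite mul_diag_mx !mxE ord1; case: eqP => [->|]; rewrite ?mulr1 ?mulr0.
apply: sup_upper_bound; last by exists v.
split; first by exists `|d 0 i|, v.
by exists t => _ [w w1 <-]; exact: odiag_norm_le.
Qed.
End OrthogonallyDiagonal.

(* Positive semidefinite matrices are the odiag Q d with d >= 0; the
   eigenvalue d_i is the quadratic form at the unit vector Q^T e_i. *)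
Lemma psd_spectral (R : realType) m (A : 'M[R]_m) : psd A ->
  exists (Q : 'M[R]_m) (d : 'rV[R]_m),
    [/\ Q *m Q^T = 1%:M, forall i, 0 <= d 0 i & A = odiag Q d].
Proof.
move=> [symA quadA]; have [Q [d [QQ AE]]] := real_spectral symA.
exists Q, d; split=> // i.
have := quadA (Q^T *m delta_mx i 0).
rewrite AE -/(odiag Q d) odiag_quad mulmxA QQ mul1mx (bigD1 i) //= big1 ?addr0.
  by rewrite mxE !eqxx expr1n mulr1.
by move=> j ji; rewrite mxE (negbTE ji) /= expr0n /= mulr0.
Qed.

Lemma psd_tr_ge0 (R : realType) m (A : 'M[R]_m) : psd A -> 0 <= \tr A.
Proof.
move=> /psd_spectral [Q [d [QQ d_ge0 ->]]].
by rewrite tr_odiag // sumr_ge0.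
Qed.

Lemma psd_tr_sqr_ge0 (R : realType) m (A : 'M[R]_m) : psd A -> 0 <= \tr (A *m A).
Proof.
move=> /psd_spectral [Q [d [QQ _ ->]]].
by rewrite tr_odiag_sqr // sumr_ge0 // => i _; exact: sqr_ge0.
Qed.

Lemma psdD (R : realType) m (A B : 'M[R]_m) : psd A -> psd B -> psd (A + B).
Proof.
move=> [sA qA] [sB qB]; split; first by rewrite raddfD /= sA sB.
by move=> v; rewrite mulmxDr mulmxDl mxE addr_ge0.
Qed.

Lemma card_gt_le_sumsq (R : realFieldType) (I : finType) (d : I -> R) t :
  0 < t -> #|[pred i | t < d i]|%:R <= (\sum_i d i ^+ 2) / t ^+ 2.
Proof.
move=> t_gt0; rewrite -sum1_card natr_sum big_mkcond /= mulr_suml.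
apply: ler_sum => i _; case: ifP => [lt_td|_]; last by rewrite divr_ge0 ?sqr_ge0.
have d_gt0 : 0 < d i := lt_trans t_gt0 lt_td.
rewrite ler_pdivlMr ?exprn_gt0 // mul1r.
by rewrite ler_sqr ?nnegrE ?(ltW t_gt0) ?(ltW d_gt0) ?(ltW lt_td).
Qed.

Lemma sum_gt_le_sumsq (R : realFieldType) (I : finType) (d : I -> R) t :
  0 < t -> \sum_(i | t < d i) d i <= (\sum_i d i ^+ 2) / t.
Proof.
move=> t_gt0; rewrite big_mkcond mulr_suml /=.
apply: ler_sum => i _; case: ifP => [lt_td|_]; last first.
  by rewrite divr_ge0 ?sqr_ge0 ?(ltW t_gt0).
have d_gt0 : 0 < d i := lt_trans t_gt0 lt_td.
by rewrite ler_pdivlMr // expr2 ler_wpM2l ?(ltW d_gt0) ?(ltW lt_td).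
Qed.

Lemma cov_splitting_move (R : realType) m (S S1 Q : 'M[R]_m) (d : 'rV[R]_m)
    (P : pred 'I_m) :
  Q *m Q^T = 1%:M -> (forall i, 0 <= d 0 i) -> cov_splitting S S1 (odiag Q d) ->
  cov_splitting S (S1 + odiag Q (mask P d)) (odiag Q (mask (predC P) d)).
Proof.
move=> QQ d_ge0 [-> psdS1 _ S1S2].
have mask_ge0 (P' : pred 'I_m) i : 0 <= mask P' d 0 i by rewrite mxE; case: ifP.
split.
- by rewrite -(odiag_mask_split _ P d) addrA.
- by apply: psdD => //; exact: odiag_psd.
- exact: odiag_psd.
- rewrite raddfD /= mulmxDl odiag_sym odiag_mask_orth // addr0.
  by rewrite odiag_mask_proj // mulmxA S1S2 mul0mx.
Qed.

(* Spectral thresholding of a splitting S = S1 (+) S2 at level t > 0: the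
   eigen-directions of S2 with eigenvalue above t are moved to the first
   summand. *)
Lemma spectral_threshold (R : realType) m (S S1 S2 : 'M[R]_m) (t : R) :
  0 < t -> cov_splitting S S1 S2 ->
  exists T1 T2 : 'M[R]_m, [/\ cov_splitting S T1 T2,
    (\rank T1)%:R <= (\rank S1)%:R + \tr (S2 *m S2) / t ^+ 2,
    \tr S2 - \tr (S2 *m S2) / t <= \tr T2 <= \tr S2,
    opnorm T2 <= t /\ (0 < \tr T2 -> 0 < opnorm T2)
  & \tr (T2 *m T2) <= \tr (S2 *m S2) /\ (0 < \tr T2 -> 0 < \tr (T2 *m T2))].
Proof.
move=> t_gt0 splitS; have [_ _ psdS2 _] := splitS.
have [Q [d [QQ d_ge0 S2E]]] := psd_spectral psdS2; rewrite S2E in splitS *.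
pose above := [pred i | t < d 0 i].
pose low := mask (predC above) d.
have low_ge0 i : 0 <= low 0 i by rewrite mxE; case: ifP.
have low_le i : low 0 i <= d 0 i by rewrite mxE; case: ifP.
have low_bound i : `|low 0 i| <= t.
  by rewrite ger0_norm // mxE /=; case: ltP => //= _; exact: ltW.
have low_pos : 0 < \tr (odiag Q low) -> exists i, 0 < low 0 i.
  rewrite tr_odiag // => sum_gt0; apply/existsP; apply: contraLR sum_gt0.
  by move=> /existsPn none; rewrite -leNgt sumr_le0 // => i _; rewrite leNgt none.
exists (S1 + odiag Q (mask above d)), (odiag Q low); split.
- exact: cov_splitting_move.
- have rank_T1 : (\rank (S1 + odiag Q (mask above d))%R <= \rank S1 + #|above|)%N.
    apply: leq_trans (mxrank_add _ _) _; rewrite leq_add2l.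
    apply: leq_trans (rank_odiag _ _) (subset_leq_card _).
    by apply/fintype.subsetP => i; rewrite !inE mxE; case: ifP; rewrite ?eqxx.
  apply: le_trans (_ : (\rank S1 + #|above|)%N%:R <= _); first by rewrite ler_nat.
  by rewrite natrD lerD2l tr_odiag_sqr //; exact: card_gt_le_sumsq.
- rewrite !tr_odiag // tr_odiag_sqr // sum_mask (bigID above) /=.
  apply/andP; split; last by rewrite lerDr sumr_ge0.
  by rewrite lerBlDr addrC lerD2l; exact: sum_gt_le_sumsq.
- split; first exact: opnorm_odiag_le (ltW t_gt0) low_bound.
  move=> /low_pos [i low_i_gt0].
  by apply: lt_le_trans (opnorm_odiag_ge QQ i (ltW t_gt0) low_bound); rewrite gtr0_norm.
- split.
    rewrite !tr_odiag_sqr //; apply: ler_sum => i _.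
    by rewrite ler_sqr ?nnegrE ?low_ge0 ?d_ge0 ?low_le.
  move=> /low_pos [i low_i_gt0]; rewrite tr_odiag_sqr // (bigD1 i) //=.
  by rewrite ltr_pwDl ?exprn_gt0 // sumr_ge0 // => j _; exact: sqr_ge0.
Qed.

(* Thresholding at the scale t = s / (delta nn), where s = tr S2,
   q = tr S2^2 and delta^4 nn <= s^2 / q: the rank grows by at most
   nn / delta^2, at least half of the trace survives, and the two effective
   ranks of the new second summand are at least delta nn / 2 and s^2 / (4 q). *)
Lemma splitting_at_scale (R : realType) m (S S1 S2 : 'M[R]_m) (nn delta : R) :
  cov_splitting S S1 S2 -> 0 < nn -> 2 <= delta ->
  delta ^+ 4 * nn <= \tr S2 ^+ 2 / \tr (S2 *m S2) ->
  exists T1 T2 : 'M[R]_m, [/\ cov_splitting S T1 T2,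
    (\rank T1)%:R <= (\rank S1)%:R + nn / delta ^+ 2,
    0 <= \tr T2 <= \tr S2,
    delta * nn / 2 <= \tr T2 / opnorm T2
  & \tr S2 ^+ 2 / \tr (S2 *m S2) / 4 <= \tr T2 ^+ 2 / \tr (T2 *m T2)].
Proof.
move=> splitS nn_gt0 delta_ge2 ratio_ge.
have [_ _ psdS2 _] := splitS.
set s := \tr S2 in ratio_ge *; set q := \tr (S2 *m S2) in ratio_ge *.
have delta_gt0 : 0 < delta by apply: lt_le_trans delta_ge2.
have ratio_gt0 : 0 < s ^+ 2 / q.
  by apply: lt_le_trans ratio_ge; rewrite mulr_gt0 ?exprn_gt0.
have q_gt0 : 0 < q.
  rewrite lt_def psd_tr_sqr_ge0 // andbT; apply: contraTneq ratio_gt0 => ->.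
  by rewrite invr0 mulr0 ltxx.
have s_gt0 : 0 < s.
  rewrite lt_def psd_tr_ge0 // andbT; apply: contraTneq ratio_gt0 => ->.
  by rewrite expr0n mul0r ltxx.
have q_le : q * delta ^+ 4 * nn <= s ^+ 2.
  by rewrite -mulrA mulrC -ler_pdivlMr // mulrC.
pose t := s / (delta * nn).
have t_gt0 : 0 < t by rewrite divr_gt0 // mulr_gt0.
have [T1 [T2 [splitT rank_le /andP [tr_ge tr_le] [op_le op_gt0] [sq_le sq_gt0]]]]
  := spectral_threshold t_gt0 splitS.
have loss_t2 : q / t ^+ 2 <= nn / delta ^+ 2.
  have -> : q / t ^+ 2 = q * delta ^+ 4 * nn * (nn / (delta ^+ 2 * s ^+ 2)).
    by rewrite /t; field; rewrite !lt0r_neq0.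
  apply: le_trans (ler_wpM2r _ q_le) _.
    by rewrite divr_ge0 ?ltW ?mulr_gt0 ?exprn_gt0.
  have -> : s ^+ 2 * (nn / (delta ^+ 2 * s ^+ 2)) = nn / delta ^+ 2.
    by field; rewrite !lt0r_neq0.
  exact: lexx.
have loss_t : q / t <= s / 2.
  have -> : q / t = q * delta ^+ 4 * nn / (delta ^+ 3 * s).
    by rewrite /t; field; rewrite !lt0r_neq0.
  have delta3_ge2 : 2 <= delta ^+ 3 by nra.
  apply: le_trans (ler_wpM2r _ q_le) _.
    by rewrite invr_ge0 ltW ?mulr_gt0 ?exprn_gt0.
  have -> : s ^+ 2 / (delta ^+ 3 * s) = s / delta ^+ 3.
    by field; rewrite !lt0r_neq0.
  by rewrite ler_pM2l // lef_pV2 // posrE ?exprn_gt0.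
have half_tr : s / 2 <= \tr T2 by apply: le_trans tr_ge; lra.
have tr_gt0 : 0 < \tr T2 by apply: lt_le_trans half_tr; rewrite divr_gt0.
exists T1, T2; split => //.
- by apply: le_trans rank_le _; rewrite lerD2l.
- by rewrite tr_le ltW.
- have -> : delta * nn / 2 = s / 2 / t by rewrite /t; field; rewrite !lt0r_neq0.
  apply: le_trans (_ : \tr T2 / t <= _); first by rewrite ler_pM2r ?invr_gt0.
  by rewrite ler_pM2l // lef_pV2 // posrE op_gt0.
- have -> : s ^+ 2 / q / 4 = (s / 2) ^+ 2 / q by field; exact: lt0r_neq0.
  apply: le_trans (_ : \tr T2 ^+ 2 / q <= _).
    rewrite ler_pM2r ?invr_gt0 // ler_sqr ?nnegrE ?(ltW tr_gt0) //.
    by rewrite divr_ge0 ?(ltW s_gt0).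
  by rewrite ler_pM2l ?exprn_gt0 // lef_pV2 // posrE sq_gt0.
Qed.

Lemma splittings_at_scale (R : realType) (d : nat -> nat)
  (Sigma S1 S2 : forall n, 'M[R]_(d n)) (delta : nat -> R) :
  (forall n, cov_splitting (Sigma n) (S1 n) (S2 n)) ->
  (forall n, delta n ^+ 4 * n%:R <= \tr (S2 n) ^+ 2 / \tr (S2 n *m S2 n)) ->
  exists T1 T2 : forall n, 'M[R]_(d n),
    (forall n, cov_splitting (Sigma n) (T1 n) (T2 n)) /\
    forall n, 0 < n%:R :> R -> 2 <= delta n -> [/\
      (\rank (T1 n))%:R <= (\rank (S1 n))%:R + n%:R / delta n ^+ 2,
      0 <= \tr (T2 n) <= \tr (S2 n),
      delta n * n%:R / 2 <= \tr (T2 n) / opnorm (T2 n)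
    & \tr (S2 n) ^+ 2 / \tr (S2 n *m S2 n) / 4
        <= \tr (T2 n) ^+ 2 / \tr (T2 n *m T2 n)].
Proof.
move=> splitS delta_le.
have pick n : exists T : 'M[R]_(d n) * 'M[R]_(d n),
    cov_splitting (Sigma n) T.1 T.2 /\ (0 < n%:R :> R -> 2 <= delta n -> [/\
      (\rank T.1)%:R <= (\rank (S1 n))%:R + n%:R / delta n ^+ 2,
      0 <= \tr T.2 <= \tr (S2 n),
      delta n * n%:R / 2 <= \tr T.2 / opnorm T.2
    & \tr (S2 n) ^+ 2 / \tr (S2 n *m S2 n) / 4 <= \tr T.2 ^+ 2 / \tr (T.2 *m T.2)]).
  have [[n_gt0 delta_ge2]|bad_scale] := pselect (0 < n%:R :> R /\ 2 <= delta n).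
    have [T1 [T2 [splitT bounds]]] :=
      splitting_at_scale (splitS n) n_gt0 delta_ge2 (delta_le n).
    by exists (T1, T2).
  by exists (S1 n, S2 n); split => // n_gt0 delta_ge2; exfalso; apply: bad_scale.
exists (fun n => (projT1 (cid (pick n))).1), (fun n => (projT1 (cid (pick n))).2).
by split => n; have [] := projT2 (cid (pick n)).
Qed.

Section Asymptotics.
Variable R : realType.
Local Open Scope classical_set_scope.
Implicit Types (f g delta : nat -> R).

Lemma little_o_n_le f g : little_o_n g ->
  (\forall n \near \oo, `|f n| <= `|g n|) -> little_o_n f.
Proof.
move=> o_g fg e e_gt0; apply: filterS2 (o_g e e_gt0) fg => n gn fgn.
exact: le_trans gn.
Qed.

Lemma little_o_nD f g : little_o_n f -> little_o_n g ->
  little_o_n (fun n => f n + g n).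
Proof.
move=> o_f o_g e e_gt0; have e2_gt0 : 0 < e / 2 by rewrite divr_gt0.
apply: filterS2 (o_f _ e2_gt0) (o_g _ e2_gt0) => n fn gn.
by apply: le_trans (ler_normD _ _) _; rewrite [e]splitr mulrDl lerD.
Qed.

Lemma omega_n_le f g : omega_n g ->
  (\forall n \near \oo, `|g n| <= `|f n|) -> omega_n f.
Proof.
move=> o_g gf C C_gt0; apply: filterS2 (o_g C C_gt0) gf => n gn gfn.
exact: le_trans gfn.
Qed.

Lemma omega_n_divr f c : 0 < c -> omega_n f -> omega_n (fun n => f n / c).
Proof.
move=> c_gt0 o_f C C_gt0; apply: filterS (o_f _ (mulr_gt0 C_gt0 c_gt0)) => n fn.
by rewrite normrM normfV (gtr0_norm c_gt0) ler_pdivlMr // mulrAC.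
Qed.

Lemma little_o_n_div_diverging delta : delta n @[n --> \oo] --> +oo ->
  little_o_n (fun n => n%:R / delta n ^+ 2).
Proof.
move=> /cvgryPge delta_oo e e_gt0.
apply: filterS (delta_oo (1 + e^-1)) => n delta_ge.
have einv_gt0 : 0 < e^-1 by rewrite invr_gt0.
have delta_ge1 : 1 <= delta n by apply: le_trans delta_ge; rewrite lerDl ltW.
have delta_gt0 : 0 < delta n by apply: lt_le_trans delta_ge1.
have delta2_ge : e^-1 <= delta n ^+ 2.
  apply: le_trans (_ : delta n <= _); first by apply: le_trans delta_ge; rewrite lerDr.
  by rewrite expr2; apply: ler_peMl => //; exact: ltW.
rewrite ger0_norm ?divr_ge0 ?sqr_ge0 // mulrC ler_wpM2r //.
by rewrite -[e]invrK lef_pV2 ?posrE ?exprn_gt0.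
Qed.

Lemma omega_n_mul_diverging delta : delta n @[n --> \oo] --> +oo ->
  omega_n (fun n => delta n * n%:R / 2).
Proof.
move=> /cvgryPge delta_oo C C_gt0; apply: filterS (delta_oo (2 * C)) => n delta_ge.
have delta_ge0 : 0 <= delta n by lra.
rewrite mulrAC ger0_norm; last by rewrite mulr_ge0 ?divr_ge0.
by rewrite ler_wpM2r //; lra.
Qed.

Definition root4_scale (h : nat -> R) (n : nat) : R :=
  Num.sqrt (Num.sqrt (h n / n%:R)).

Lemma root4_scaleE (h : nat -> R) n : 0 <= h n -> (0 < n)%N ->
  root4_scale h n ^+ 4 = h n / n%:R.
Proof.
move=> h_ge0 n_gt0; rewrite (_ : 4%N = (2 * 2)%N) // exprM.
by rewrite !sqr_sqrtr ?sqrtr_ge0 ?divr_ge0.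
Qed.

Lemma root4_scale_le (h : nat -> R) n : 0 <= h n ->
  root4_scale h n ^+ 4 * n%:R <= h n.
Proof.
have [->|n_gt0] := posnP n; first by rewrite mulr_natr mulr0n.
move=> h_ge0.
by rewrite root4_scaleE // divfK // pnatr_eq0 -lt0n.
Qed.

Lemma root4_scale_diverging (h : nat -> R) : (forall n, 0 <= h n) ->
  omega_n h -> root4_scale h n @[n --> \oo] --> +oo.
Proof.
move=> h_ge0 o_h; apply/cvgryPge => A.
have [A_le0|A_gt0] := leP A 0.
  by apply: nearW => n; apply: le_trans A_le0 _; exact: sqrtr_ge0.
apply: filterS2 (o_h _ (exprn_gt0 4 A_gt0)) (nbhs_infty_gt 0) => n hn n_gt0.
rewrite -(ler_pXn2r (isT : (0 < 4)%N)) ?nnegrE ?sqrtr_ge0 ?(ltW A_gt0) //.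
by rewrite root4_scaleE // ler_pdivlMr ?ltr0n // -(ger0_norm (h_ge0 n)).
Qed.

End Asymptotics.

Local Open Scope classical_set_scope.
Theorem theorem8 (R : realType) (d : nat -> nat)
  (Sigma : forall n : nat, 'M[R]_(d n))
  (hpsd : forall n, psd (Sigma n))
  (S1 S2 : forall n : nat, 'M[R]_(d n))
  (hsplit : forall n, cov_splitting (Sigma n) (S1 n) (S2 n))
  (hrank : little_o_n (R:=R) (fun n => (\rank (S1 n))%:R))
  (htr : little_o_n (R:=R) (fun n => \tr (S2 n)))
  (heff : omega_n (R:=R) (fun n => (\tr (S2 n)) ^+ 2 / \tr (S2 n *m S2 n))) :
  exists (T1 T2 : forall n : nat, 'M[R]_(d n)),
    [/\ forall n, cov_splitting (Sigma n) (T1 n) (T2 n),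
        little_o_n (R:=R) (fun n => (\rank (T1 n))%:R),
        little_o_n (R:=R) (fun n => \tr (T2 n)),
        omega_n (R:=R) (fun n => \tr (T2 n) / opnorm (T2 n))
      & omega_n (R:=R) (fun n => (\tr (T2 n)) ^+ 2 / \tr (T2 n *m T2 n))].
Proof.
pose ratio n := \tr (S2 n) ^+ 2 / \tr (S2 n *m S2 n).
have ratio_ge0 n : 0 <= ratio n.
  by have [_ _ psdS2 _] := hsplit n; rewrite divr_ge0 ?sqr_ge0 ?psd_tr_sqr_ge0.
pose delta := root4_scale ratio.
have delta_oo : delta n @[n --> \oo] --> +oo.
  exact: root4_scale_diverging ratio_ge0 heff.
have delta_le n : delta n ^+ 4 * n%:R <= ratio n by exact: root4_scale_le.
have [T1 [T2 [splitT boundsT]]] := splittings_at_scale hsplit delta_le.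
have admissible : \forall n \near \oo, 0 < n%:R :> R /\ 2 <= delta n.
  apply: filterS2 (nbhs_infty_gt 0) (proj1 (cvgryPge _) delta_oo 2) => n n_gt0.
  by rewrite ltr0n.
exists T1, T2; split => //.
- apply: little_o_n_le (little_o_nD hrank (little_o_n_div_diverging delta_oo)) _.
  apply: filterS admissible => n [n_gt0 delta_ge2].
  have [rank_le _ _ _] := boundsT n n_gt0 delta_ge2.
  rewrite ger0_norm //; exact: le_trans rank_le (ler_norm _).
- apply: little_o_n_le htr _; apply: filterS admissible => n [n_gt0 delta_ge2].
  have [_ /andP [tr_ge0 tr_le] _ _] := boundsT n n_gt0 delta_ge2.
  rewrite ger0_norm //; exact: le_trans tr_le (ler_norm _).
- apply: omega_n_le (omega_n_mul_diverging delta_oo) _.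
  apply: filterS admissible => n [n_gt0 delta_ge2].
  have [_ _ op_bound _] := boundsT n n_gt0 delta_ge2.
  have scale_ge0 : 0 <= delta n * n%:R / 2 by rewrite divr_ge0 ?mulr_ge0 ?sqrtr_ge0.
  rewrite ger0_norm //; exact: le_trans op_bound (ler_norm _).
- have four_gt0 : (0 : R) < 4 by lra.
  apply: omega_n_le (omega_n_divr four_gt0 heff) _.
  apply: filterS admissible => n [n_gt0 delta_ge2].
  have [_ _ _ sq_bound] := boundsT n n_gt0 delta_ge2.
  rewrite ger0_norm; last exact: divr_ge0 (ratio_ge0 n) (ltW four_gt0).
  exact: le_trans sq_bound (ler_norm _).
Qed.
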